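(* Let $(R,B)\in\mathcal{D}_d$ with $R=\mathrm{diag}(m_1,\dots,m_d)$ and $m_1,\dots,m_d\ge d+1$. Let $(p_b)_{b\in B}$ be positive weights and $\lambda=\sum_{b\in B}p_b\delta_b$. Let $\mu$ be a finite nonzero Borel measure on $\mathbb{R}^d$ with $\operatorname{spt}(\mu)\subseteq[0,1]^d$, and set $\nu=(\lambda*\mu)\circ R$, i.e., $\nu(F)=(\lambda*\mu)(RF)$ for Borel $F$. Then there is a Borel set $E\subseteq\mathbb{R}^d$ with $\nu(E)>0$ and $\nu(E+n)=0$ for all $n\in\mathbb{Z}^d\setminus\{\mathbf{0}\}$.
   Context: $\mathcal{D}_d$ is the set of pairs $(R,B)$ with $R=\mathrm{diag}(m_1,\dots,m_d)$, $m_1,\dots,m_d\ge2$ integers, and $B$ a nonempty subset of $\{0,\dots,m_1-1\}\times\cdots\times\{0,\dots,m_d-1\}$. $\operatorname{spt}(\mu)$ denotes the support of $\mu$ (smallest closed set of full measure). *)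

(* R^d is modelled as d.-tuple R, which
   MathComp-Analysis equips with the product sigma-algebra of the Borel
   sigma-algebras of R (= the Borel sigma-algebra of R^d). *)
From HB Require Import structures.
From mathcomp Require Import all_boot all_order all_algebra.
From mathcomp Require Import all_classical all_reals all_analysis.
Set Implicit Arguments. Unset Strict Implicit. Unset Printing Implicit Defensive.
Import Order.TTheory GRing.Theory Num.Theory.
Local Open Scope classical_set_scope.
Local Open Scope ring_scope.

Section Defs.
Context {R : realType} {d : nat}.

Definition vadd (x y : d.-tuple R) : d.-tuple R := [tuple tnth x i + tnth y i | i < d].
Definition vsub (x y : d.-tuple R) : d.-tuple R := [tuple tnth x i - tnth y i | i < d].

Definition intvec (n : d.-tuple int) : d.-tuple R := [tuple (tnth n i)%:~R | i < d].
Definition natvec (b : d.-tuple nat) : d.-tuple R := [tuple (tnth b i)%:R | i < d].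

Definition diagmul (m : d.-tuple nat) (x : d.-tuple R) : d.-tuple R :=
  [tuple (tnth m i)%:R * tnth x i | i < d].

Definition translate (A : set (d.-tuple R)) (v : d.-tuple R) : set (d.-tuple R) :=
  [set vadd x v | x in A].

(* support of a measure: points all of whose (cubical) open neighbourhoods
   have positive measure; this is the smallest closed set of full measure *)
Definition spt (mu : set (d.-tuple R) -> \bar R) : set (d.-tuple R) :=
  [set x : d.-tuple R | forall e : R, (0 < e)%R ->
     (0 < mu [set y : d.-tuple R | forall i, (`|tnth y i - tnth x i| < e)%R])%E].

Definition unit_cube : set (d.-tuple R) := [set x : d.-tuple R | forall i, (0 <= tnth x i <= 1)%R].

(* (lambda * mu)(A) with lambda = sum_{b in B} p_b delta_b :
   (lambda * mu)(A) = sum_b p_b mu(A - b) *)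
Definition conv_discrete (B : seq (d.-tuple nat)) (p : d.-tuple nat -> R)
  (mu : set (d.-tuple R) -> \bar R) (A : set (d.-tuple R)) : \bar R :=
  (\sum_(b <- B) (p b)%:E * mu [set vsub x (natvec b) | x in A])%E.

Definition nu_of (m : d.-tuple nat) (B : seq (d.-tuple nat)) (p : d.-tuple nat -> R)
  (mu : set (d.-tuple R) -> \bar R) (F : set (d.-tuple R)) : \bar R :=
  conv_discrete B p mu (diagmul m @` F).

End Defs.

From HB Require Import structures.
From mathcomp Require Import all_boot all_order all_algebra.
From mathcomp Require Import all_classical all_reals all_analysis.
From mathcomp Require Import measurable_realfun.
From mathcomp Require Import zify ring lra.

(* The integers and the open intervals between them are the cells of R;
   every real t lies in exactly one of them, coded by twice its midpoint,
   floor t + ceil t.  Products of cells partition R^d, and translating by an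
   integer vector c shifts codes by 2c.  As spt mu lies in [0,1]^d, only cells
   with codes in {0,1,2}^d carry mass.  Call the code k of a cell C_k charged
   if mu (C_k - b) > 0 for some b in B, i.e. nu (R^-1 C_k) > 0, take a charged
   k closest to the code m of the centre of R[0,1]^d and put E = R^-1 C_k.
   If nu (E + n) > 0 with n <> 0, two more charged codes k', k'' appear with
   k' + k'' = 2k + 2Rn; as neither is closer to m than k, coordinatewise
   arithmetic yields 8 m_i <= 8 d for an i with n_i <> 0, contradicting
   m_i >= d + 1. *)

Set Implicit Arguments.
Unset Strict Implicit.
Unset Printing Implicit Defensive.

Import Order.TTheory GRing.Theory Num.Theory.
Local Open Scope classical_set_scope.
Local Open Scope ring_scope.

Lemma negligible_bigcup_countable d (T : sigmaRingType d) (R : realFieldType)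
    (mu : {measure set T -> \bar R}) (I : countType) (F : I -> set T) :
  (forall i, mu.-negligible (F i)) -> mu.-negligible (\bigcup_i F i).
Proof.
move=> negF.
pose G n := if unpickle n is Some i then F i else set0.
apply: (negligibleS _ (negligible_bigcup (F := G) _)).
  by move=> x [i _ Fix]; exists (pickle i) => //; rewrite /G pickleK.
move=> n; rewrite /G; case: unpickle => [i|]; first exact: negF.
exact: negligible_set0.
Qed.

Section Support.
Context {R : realType} {d : nat}.

Lemma measurable_coordwise (P : 'I_d -> set R) : (forall i, measurable (P i)) ->
  measurable [set y : d.-tuple R | forall i, P i (tnth y i)].
Proof.
move=> mP.
have -> : [set y : d.-tuple R | forall i, P i (tnth y i)] =
   \bigcap_(i in [set: 'I_d]) ((fun y => tnth y i) @^-1` P i).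
  by apply/seteqP; split => [y Py i _|y Py i]; [exact: Py | exact: Py].
apply: fin_bigcap_measurable => // i _.
by rewrite -[_ @^-1` _]setTI; exact: measurable_tnth.
Qed.

Definition open_cube (c : d.-tuple R) (r : R) : set (d.-tuple R) :=
  [set y | forall i, `|tnth y i - tnth c i| < r].

Lemma measurable_open_cube c r : measurable (open_cube c r).
Proof.
rewrite /open_cube.
apply: (measurable_coordwise
  (P := fun i => [set t : R | `|t - tnth c i| < r])) => i.
have -> : [set t : R | `|t - tnth c i| < r] =
    `](tnth c i - r), (tnth c i + r)[%classic.
  by apply/seteqP; split => t; rewrite /= in_itv /= ltr_distl.
exact: measurable_itv.
Qed.

Definition grid_cube (k : nat) (z : d.-tuple int) : set (d.-tuple R) :=
  open_cube [tuple (tnth z i)%:~R / k.+1%:R | i < d] k.+1%:R^-1.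

Lemma grid_cube_between (x : d.-tuple R) (e : R) : 0 < e ->
  exists k z, grid_cube k z x /\ grid_cube k z `<=` open_cube x e.
Proof.
move=> e0; set k := Num.truncn (2 / e).
have k_gt : 2 / e < k.+1%:R by exact: truncnS_gt.
have k0 : (0 : R) < k.+1%:R by rewrite ltr0n.
pose z := [tuple Num.floor (tnth x i * k.+1%:R) | i < d].
have xQ : grid_cube k z x.
  move=> i; rewrite !tnth_mktuple.
  have /andP [fl_le fl_gt] := floor_itv (tnth x i * k.+1%:R).
  rewrite intrD in fl_gt.
  set a : R := k.+1%:R in k0 fl_le fl_gt *.
  set f : R := (Num.floor (tnth x i * a))%:~R in fl_le fl_gt *.
  have a0 : a != 0 by rewrite gt_eqF.
  rewrite ltr_distl -[_ < tnth x i](ltr_pM2r k0) -[tnth x i < _](ltr_pM2r k0).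
  rewrite mulrBl mulrDl divfK // mulVf //.
  by apply/andP; split; lra.
exists k, z; split => // y yQ i.
have := yQ i; have := xQ i; rewrite /= => xi yi.
have -> : tnth y i - tnth x i =
  (tnth y i - tnth [tuple (tnth z i)%:~R / k.+1%:R | i < d] i) -
  (tnth x i - tnth [tuple (tnth z i)%:~R / k.+1%:R | i < d] i) by ring.
rewrite (le_lt_trans (ler_normB _ _)) // (lt_trans (ltrD yi xi)) //.
have two_inv_lt : 2 / k.+1%:R < e by rewrite ltr_pdivrMr // mulrC -ltr_pdivrMr.
by rewrite -mulr2n -(mulr_natl _ 2).
Qed.

Lemma negligible_outside_spt (mu : {measure set (d.-tuple R) -> \bar R})
    (A : set (d.-tuple R)) :
  spt mu `<=` A -> mu.-negligible (~` A).
Proof.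
move=> sptA.
(* [~` A] is covered by the countably many grid cubes of measure zero. *)
pose F (kz : nat * d.-tuple int) :=
  if pselect (mu (grid_cube kz.1 kz.2) = 0) is left _ then grid_cube kz.1 kz.2
  else set0.
apply: (negligibleS _ (negligible_bigcup_countable (F := F) _)).
  move=> x /= notAx.
  have /existsNP [e /not_implyP [e0 cube_null]] : ~ spt mu x by move/sptA.
  have [k [z [xQ Qsub]]] := grid_cube_between x e0.
  have Q0 : mu (grid_cube k z) = 0.
    apply/eqP; rewrite -measure_le0 (le_trans (le_measure _ _ _ Qsub)) ?inE //;
      [exact: measurable_open_cube | exact: measurable_open_cube |].
    by rewrite leNgt; exact/negP.
  by exists (k, z) => //; rewrite /F /=; case: pselect.
move=> [k z]; rewrite /F /=; case: pselect => [Q0|_]; last exact: negligible_set0.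
by exists (grid_cube k z); split => //; exact: measurable_open_cube.
Qed.

End Support.

Section Cells.
Context {R : realType}.

(* [cell_code t] is [2 t] for integral [t] and [2 (floor t) + 1] otherwise: it
   codes the cells [{z}] and []z, z + 1[] of R by twice their midpoints. *)
Definition cell_code (t : R) : int := Num.floor t + Num.ceil t.

Lemma cell_codeDz (t : R) (c : int) : cell_code (t + c%:~R) = cell_code t + 2 * c.
Proof.
by rewrite /cell_code floorDrz ?ceilDrz ?intr_int // intrKfloor intrKceil; ring.
Qed.

Lemma cell_code_unit_itv (t : R) : 0 <= t <= 1 -> 0 <= cell_code t <= 2.
Proof.
move=> /andP [t_ge0 t_le1].
have fl_ge0 : 0 <= Num.floor t by rewrite floor_ge0.
have cl_ge0 : 0 <= Num.ceil t by rewrite ceil_ge0 (lt_le_trans _ t_ge0) ?ltrN10.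
have fl_le1 : Num.floor t <= 1 by rewrite -(floor1 R) le_floor.
have cl_le1 : Num.ceil t <= 1 by rewrite ceil_le_int.
by rewrite /cell_code; lia.
Qed.

Lemma measurable_cell_code (f : R -> R) (j : int) : measurable_fun setT f ->
  measurable [set t | cell_code (f t) = j].
Proof.
move=> mf.
have code_nd : nondecreasing_fun (fun t : R => (cell_code t)%:~R : R).
  by move=> x y xy; rewrite ler_int lerD ?le_floor ?le_ceil.
have mcode := measurableT_comp (nondecreasing_measurable measurableT code_nd) mf.
have -> : [set t | cell_code (f t) = j] =
    setT `&` ((fun t => (cell_code t)%:~R : R) \o f) @^-1` [set j%:~R].
  by apply/seteqP; split => t /=; [move=> -> | move=> [_ /intr_inj]].
exact: mcode.
Qed.

Context {d : nat}.

Definition cell (k : 'I_d -> int) : set (d.-tuple R) :=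
  [set x | forall i, cell_code (tnth x i) = k i].

Lemma measurable_cell k : measurable (cell k).
Proof.
apply: (measurable_coordwise (P := fun i => [set t | cell_code t = k i])) => i.
by apply: measurable_cell_code; exact: measurable_id.
Qed.

Lemma measurable_diagmul_preimage_cell (m : d.-tuple nat) k :
  measurable (diagmul m @^-1` cell k).
Proof.
have -> : diagmul m @^-1` cell k =
    [set x | forall i, cell_code ((tnth m i)%:R * tnth x i) = k i].
  by apply/seteqP; split => x /= xk i; have := xk i; rewrite tnth_mktuple.
apply: (measurable_coordwise
  (P := fun i => [set t | cell_code ((tnth m i)%:R * t) = k i])) => i.
by apply: measurable_cell_code; exact: mulrl_measurable.
Qed.

Lemma translate_cell k (n : d.-tuple int) :
  translate (cell k) (intvec n) = cell (fun i => k i + 2 * tnth n i).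
Proof.
apply/seteqP; split => [_ [x xk <-] i|y yk].
  by rewrite /vadd /intvec !tnth_mktuple cell_codeDz xk.
exists [tuple tnth y i + (- tnth n i)%:~R | i < d].
  by move=> i; rewrite tnth_mktuple cell_codeDz yk; ring.
by apply: eq_from_tnth => i; rewrite /vadd /intvec !tnth_mktuple intrN subrK.
Qed.

Lemma image_vsub_natvec (A : set (d.-tuple R)) (b : d.-tuple nat) :
  [set vsub x (natvec b) | x in A] =
  translate A (intvec [tuple - (tnth b i)%:Z | i < d]).
Proof.
apply: eq_imagel => x _; apply: eq_from_tnth => i.
by rewrite /vsub /vadd /natvec /intvec !tnth_mktuple intrN.
Qed.

Lemma image_diagmul_translate (m : d.-tuple nat) (A : set (d.-tuple R))
    (n : d.-tuple int) :
  diagmul m @` translate A (intvec n) =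
  translate (diagmul m @` A) (intvec [tuple (tnth m i)%:Z * tnth n i | i < d]).
Proof.
rewrite /translate !image_comp; apply: eq_imagel => x _; apply: eq_from_tnth => i.
by rewrite /= /diagmul /vadd /intvec !tnth_mktuple mulrDr intrM.
Qed.

Lemma image_diagmul_preimage (m : d.-tuple nat) (A : set (d.-tuple R)) :
  (forall i, 0 < tnth m i)%N -> diagmul m @` (diagmul m @^-1` A) = A.
Proof.
move=> m_gt0; apply: image_preimage; rewrite -subTset => y _.
exists [tuple tnth y i / (tnth m i)%:R | i < d] => //.
apply: eq_from_tnth => i; rewrite /diagmul !tnth_mktuple mulrC divfK //.
by rewrite pnatr_eq0 -lt0n.
Qed.

End Cells.

Section NuOfCells.
Context {R : realType} {d : nat}.
Variables (m : d.-tuple nat) (B : seq (d.-tuple nat)) (p : d.-tuple nat -> R).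
Variable mu : {measure set (d.-tuple R) -> \bar R}.
Hypothesis m_gt0 : forall i, (0 < tnth m i)%N.

Lemma nu_of_diagmul_preimage_cell k :
  nu_of m B p mu (diagmul m @^-1` cell k) =
  (\sum_(b <- B) (p b)%:E * mu (cell (fun i => k i - 2 * (tnth b i)%:Z)%R))%E.
Proof.
apply: eq_bigr => b _; rewrite image_diagmul_preimage // image_vsub_natvec.
by rewrite translate_cell; under eq_fun do rewrite tnth_mktuple mulrN.
Qed.

Lemma nu_of_translate_diagmul_preimage_cell k (n : d.-tuple int) :
  nu_of m B p mu (translate (diagmul m @^-1` cell k) (intvec n)) =
  (\sum_(b <- B) (p b)%:E * mu (cell (fun i =>
     k i + 2 * ((tnth m i)%:Z * tnth n i) - 2 * (tnth b i)%:Z)%R))%E.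
Proof.
apply: eq_bigr => b _.
rewrite image_vsub_natvec image_diagmul_translate image_diagmul_preimage //.
by rewrite !translate_cell; under eq_fun do rewrite !tnth_mktuple mulrN.
Qed.

End NuOfCells.

Section PositiveCells.
Context {R : realType} {d : nat}.
Variable mu : {measure set (d.-tuple R) -> \bar R}.

Lemma exists_cell_gt0 : mu setT != 0%E -> exists k, (0 < mu (cell k))%E.
Proof.
move=> mu_neq0; apply: contrapT => no_pos.
have cell_null (k : {ffun 'I_d -> int}) : mu.-negligible (cell k).
  apply/(negligibleP mu (measurable_cell k)).
  apply/eqP; rewrite -measure_le0 leNgt; apply/negP => pos.
  by apply: no_pos; exists k.
have : mu.-negligible setT.
  apply: negligibleS (negligible_bigcup_countable cell_null) => x _.
  by exists [ffun i => cell_code (tnth x i)] => // i; rewrite ffunE.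
by move/(measure_negligible measurableT)/eqP; apply/negP.
Qed.

Lemma cell_gt0_code_unit k : spt mu `<=` unit_cube ->
  (0 < mu (cell k))%E -> forall i, 0 <= k i <= 2.
Proof.
move=> spt_cube k_pos.
have [x [kx cube_x]] : exists x : d.-tuple R, cell k x /\ unit_cube x.
  apply: contrapT => disj.
  have : mu.-negligible (cell k).
    apply: negligibleS (negligible_outside_spt spt_cube) => x kx cube_x.
    by apply: disj; exists x.
  move/(measure_negligible (measurable_cell k)) => k_null.
  by rewrite k_null ltxx in k_pos.
by move=> i; rewrite -kx; exact: cell_code_unit_itv.
Qed.

End PositiveCells.

Lemma code_shift_sqr_le (m b b' : nat) (k n : int) :
  (b < m)%N -> (b' < m)%N ->
  0 <= k - 2 * b'%:Z <= 2 -> 0 <= k + 2 * (m%:Z * n) - 2 * b%:Z <= 2 ->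
  (k + 2 * (m%:Z * n) - 2 * b%:Z + 2 * b'%:Z - m%:Z) ^+ 2 +
  (k - 2 * b'%:Z + 2 * b%:Z - m%:Z) ^+ 2 + (if n == 0 then 0 else 8 * m%:Z)
  <= 2 * (k - m%:Z) ^+ 2 + 8.
Proof.
move=> b_lt b'_lt /andP [j_ge0 j_le2] /andP [j'_ge0 j'_le2].
have n_cases : n = 0 \/ n = 1 \/ n = -1 by nia.
case: n_cases j'_ge0 j'_le2 => [->|[->|->]] j'_ge0 j'_le2 /=.
- (* (u + δ)^2 + (u - δ)^2 = 2 u^2 + 2 δ^2 with δ = 2 (b' - b) in [-2, 2] *)
  rewrite mulr0 addr0 in j'_ge0 j'_le2 *.
  have δ_sqr : 0 <= (2 - (2 * b'%:Z - 2 * b%:Z)) * (2 + (2 * b'%:Z - 2 * b%:Z)).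
    by apply: mulr_ge0; lia.
  rewrite !expr2; nia.
- (* for n = 1 or n = -1 the ranges pin down k, b and b'; the bound is sharp *)
  have [-> -> ->] : [/\ k = 0, b'%:Z = 0 & b%:Z = m%:Z - 1] by split; lia.
  by rewrite !expr2; lia.
- have [-> -> ->] : [/\ k = 2 * m%:Z, b%:Z = 0 & b'%:Z = m%:Z - 1] by split; lia.
  by rewrite !expr2; lia.
Qed.

Lemma exists_min_nonneg (T : Type) (P : T -> Prop) (f : T -> int) :
  (forall x, 0 <= f x) -> (exists x, P x) ->
  exists2 x, P x & forall y, P y -> f x <= f y.
Proof.
move=> f_ge0 [x0 Px0].
have ex_val : exists n, `[< exists2 x, P x & f x = n%:Z >].
  by exists `|f x0|%N; apply/asboolP; exists x0; rewrite ?gez0_abs.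
case: (ex_minnP ex_val) => n /asboolP [x Px fx] n_min.
exists x => // y Py; rewrite fx -(gez0_abs (f_ge0 y)) lez_nat.
by apply: n_min; apply/asboolP; exists y; rewrite ?gez0_abs.
Qed.

Section MinimalChargedCell.
Context {R : realType} {d : nat}.
Variables (m : d.-tuple nat) (B : seq (d.-tuple nat)).
Variable mu : {measure set (d.-tuple R) -> \bar R}.

(* Codes and [m] are doubled coordinates: this is four times the squared
   distance from the midpoint of [cell k] to the centre of R[0,1]^d. *)
Definition center_dist2 (k : 'I_d -> int) : int :=
  \sum_(i < d) (k i - (tnth m i)%:Z) ^+ 2.

Lemma center_dist2_ge0 k : 0 <= center_dist2 k.
Proof. by apply: sumr_ge0 => i _; exact: sqr_ge0. Qed.

(* As the weights are positive, [charged k] means [nu (R^-1 (cell k)) > 0]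
   by [nu_of_diagmul_preimage_cell]. *)
Definition charged (k : 'I_d -> int) : Prop :=
  exists2 b, b \in B & (0 < mu (cell (fun i => k i - 2 * (tnth b i)%:Z)%R))%E.

Hypothesis B_lt_m : forall b, b \in B -> forall i, (tnth b i < tnth m i)%N.
Hypothesis m_gt_d : forall i, (d < tnth m i)%N.
Hypothesis spt_cube : spt mu `<=` unit_cube.

Lemma min_charged_translate_null k bs b (n : d.-tuple int) (i0 : 'I_d) :
  (forall k', charged k' -> center_dist2 k <= center_dist2 k') ->
  bs \in B -> (0 < mu (cell (fun i => k i - 2 * (tnth bs i)%:Z)%R))%E ->
  b \in B -> tnth n i0 != 0 ->
  mu (cell (fun i =>
    k i + 2 * ((tnth m i)%:Z * tnth n i) - 2 * (tnth b i)%:Z)) = 0%E.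
Proof.
move=> k_min bsB j_pos bB n_i0.
apply/eqP; rewrite -measure_le0 leNgt; apply/negP => j'_pos.
have j_rng := cell_gt0_code_unit spt_cube j_pos.
have j'_rng := cell_gt0_code_unit spt_cube j'_pos.
(* Both codes are charged (via [bs], resp. [b]) and sum to [2 k + 2 R n]. *)
have dist_k' : center_dist2 k <= center_dist2 (fun i =>
    k i + 2 * ((tnth m i)%:Z * tnth n i) - 2 * (tnth b i)%:Z + 2 * (tnth bs i)%:Z).
  by apply: k_min; exists bs => //; under eq_fun do rewrite addrK.
have dist_k'' : center_dist2 k <=
    center_dist2 (fun i => k i - 2 * (tnth bs i)%:Z + 2 * (tnth b i)%:Z).
  by apply: k_min; exists b => //; under eq_fun do rewrite addrK.
have coord i :=
  code_shift_sqr_le (B_lt_m bB i) (B_lt_m bsB i) (j_rng i) (j'_rng i).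
have := ler_sum (index_enum 'I_d) (P := xpredT) (fun i _ => coord i).
rewrite !big_split /= sumr_const card_ord -mulr_sumr.
have shift_ge : 8 * (tnth m i0)%:Z <=
    \sum_(i < d) (if tnth n i == 0 then 0 else 8 * (tnth m i)%:Z).
  rewrite (bigD1 i0) //= (negPf n_i0) lerDl sumr_ge0 // => i _.
  by case: ifP.
move: dist_k' dist_k'' shift_ge (m_gt_d i0); rewrite /center_dist2.
set D := \sum_(i < d) (k i - _) ^+ 2.
set D' := \sum_(i < d) _ ^+ 2.
set D'' := \sum_(i < d) _ ^+ 2.
set S := \sum_(i < d) _.
lia.
Qed.

End MinimalChargedCell.

Theorem theorem4p1 (R : realType) (d : nat) (m : d.-tuple nat)
  (B : seq (d.-tuple nat)) (p : d.-tuple nat -> R)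
  (mu : {measure set (d.-tuple R) -> \bar R}) :
  (* (R, B) in D_d, with m_i >= d + 1 *)
  (forall i, 2 <= tnth m i)%N ->
  (forall i, d.+1 <= tnth m i)%N ->
  B != [::] -> uniq B ->
  (forall b, b \in B -> forall i, tnth b i < tnth m i)%N ->
  (* positive weights *)
  (forall b, b \in B -> 0 < p b) ->
  (* mu finite, nonzero Borel measure with support in [0,1]^d *)
  (mu setT < +oo)%E -> mu setT != 0%E ->
  spt mu `<=` unit_cube ->
  exists E : set (d.-tuple R), measurable E /\
    (0 < nu_of m B p mu E)%E /\
    (forall n : d.-tuple int, n != [tuple 0 | _ < d] ->
       nu_of m B p mu (translate E (intvec n)) = 0%E).
Proof.
move=> _ m_gt_d B_neq0 _ B_lt_m p_gt0 _ mu_neq0 spt_cube.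
have m_gt0 i : (0 < tnth m i)%N by apply: leq_trans (m_gt_d i).
have [b0 b0B] : exists b, b \in B.
  by move: B_neq0; case: (B) => // b B' _; exists b; rewrite mem_head.
have [j j_pos] := exists_cell_gt0 mu_neq0.
have charged_ex : exists k, charged B mu k.
  exists (fun i => j i + 2 * (tnth b0 i)%:Z); exists b0 => //.
  by under eq_fun do rewrite addrK.
have [k [bs bsB k_pos] k_min] := exists_min_nonneg (center_dist2_ge0 m) charged_ex.
exists (diagmul m @^-1` cell k); split; first exact: measurable_diagmul_preimage_cell.
split.
  rewrite nu_of_diagmul_preimage_cell // (big_rem bs bsB) /= lte_paddr //.
    rewrite big_seq sume_ge0 // => b /mem_rem bB.
    by rewrite mule_ge0 // lee_fin ltW ?p_gt0.
  by rewrite mule_gt0 // lte_fin p_gt0.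
move=> n n_neq0.
have [i0 n_i0] : exists i, tnth n i != 0.
  apply/existsP; apply: contraNT n_neq0 => /existsPn n_eq0.
  by apply/eqP/eq_from_tnth => i; rewrite tnth_mktuple; apply/eqP/negPn/n_eq0.
rewrite nu_of_translate_diagmul_preimage_cell // big_seq big1 // => b bB.
have null := min_charged_translate_null B_lt_m m_gt_d spt_cube k_min bsB k_pos bB n_i0.
by rewrite null mule0.
Qed.
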